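(* Suppose $\theta_t$ is time-varying and $\mathbb{S}_\theta=\{\theta\in\mathbb{R}^{d_\theta}:[\theta]_k\ge0\ \forall k,\ \sum_k[\theta]_k=1\}$. Then the system $x_{t+1}=A_t(\theta_t)x_t+B_t(\theta_t)u_t$ is time-varying SMP in each of the following cases: (a) $v_t(\theta_t)=\sum_{k=1}^{d_\theta}[\theta_t]_kv^{(k)}$ with deterministic vectors $v^{(k)}$, the conditional expectation $\mathrm{E}[v_tv_t^\top|\theta_\bullet]$ being taken as the deterministic value $v_tv_t^\top$: with $N=d_\theta^2$, $\phi(\theta_t)=\mathrm{vec}(\theta_t\theta_t^\top)$, $M^{(d_\theta(k'-1)+k)}=\tfrac12(v^{(k)}v^{(k')\top}+v^{(k')}v^{(k)\top})$; (b) $v_t(\theta_t)=\sum_{k=1}^{d_\theta}[\theta_t]_kv_t^{(k)}$ with random vertices $v_t^{(k)}$ i.i.d. with respect to $t$ and independent of the parameters: with $N=d_\theta^2$, $\phi(\theta_t)=\mathrm{vec}(\theta_t\theta_t^\top)$, $M^{(d_\theta(k'-1)+k)}=\tfrac12\mathrm{E}[v_t^{(k)}v_t^{(k')\top}+v_t^{(k')}v_t^{(k)\top}]$; (c) $\mathrm{E}[v_t(\theta_t)|\theta_\bullet]=\sum_k[\theta_t]_k\mu^{(k)}$ and $\mathrm{Cov}[v_t(\theta_t)|\theta_\bullet]=\sum_k[\theta_t]_k\Sigma^{(k)}$ with deterministic $\mu^{(k)}$ and symmetric $\Sigma^{(k)}$: with $N=d_\theta^2$, $\phi(\theta_t)=\mathrm{vec}(\theta_t\theta_t^\top)$,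 $M^{(d_\theta(k'-1)+k)}=\tfrac12(\mu^{(k)}\mu^{(k')\top}+\mu^{(k')}\mu^{(k)\top})+\Sigma^{(k)}$.
   Context: System $x_{t+1}=A_t(\theta_t)x_t+B_t(\theta_t)u_t$ with $x_t\in\mathbb{R}^n$, $u_t\in\mathbb{R}^m$, uncertain $\theta_t\in\mathbb{S}_\theta\subset\mathbb{R}^{d_\theta}$, random $v_t(\theta_t):=\mathrm{vec}([A_t(\theta_t),B_t(\theta_t)])\in\mathbb{R}^{n(n+m)}$ ($\mathrm{vec}$ stacks columns) with conditional density $p(v_t\mid\theta_t)$, independent over $t$; $\mathrm{E}[\cdot|\theta_\bullet]$, $\mathrm{Cov}[\cdot|\theta_\bullet]$ are conditional on the parameter sequence $(\theta_0,\theta_1,\dots)$. $\mathbb{P}_N:=\{\varphi\in\mathbb{R}^N:\varphi_k\ge0,\sum\varphi_k=1\}$. SMP: there exist $N$, symmetric $M^{(1)},\dots,M^{(N)}$ and $\phi:\mathbb{S}_\theta\to\mathbb{P}_N$ with $\mathrm{E}[v_tv_t^\top|\theta_\bullet]=\sum_k[\phi(\theta_t)]_kM^{(k)}$ for all $t$ and all parameter sequences in $\mathbb{S}_\theta$; time-varying (TV) SMP if the parameters are allowed to vary with $t$. *)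

From HB Require Import structures.
From mathcomp Require Import all_boot all_order all_algebra.
From mathcomp Require Import all_classical all_reals all_analysis.
Set Implicit Arguments. Unset Strict Implicit. Unset Printing Implicit Defensive.
Import Order.TTheory GRing.Theory Num.Theory.
Local Open Scope ring_scope.

(* vec: column stacking.  For A : 'M_(p,q), vecc A : 'cV_(q*p) and
   (vecc A) (mxvec_index j i) 0 = A i j, i.e. entry (i,j) sits at
   0-based position q... = j*p + i (columns stacked). *)
Definition vecc (R : Type) (p q : nat) (A : 'M[R]_(p, q)) : 'cV[R]_(q * p) :=
  (mxvec A^T)^T.

Definition simplex (R : numDomainType) (N : nat) (phi : 'cV[R]_N) : Prop :=
  (forall k, 0 <= phi k 0) /\ \sum_(k < N) phi k 0 = 1.

Definition Emx (R : realType) (d : measure_display) (T : measurableType d)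
  (P : probability T R) (p q : nat) (X : T -> 'M[R]_(p, q)) : 'M[R]_(p, q) :=
  \matrix_(i, j) fine ('E_P[fun w => X w i j])%E.

Definition Covmx (R : realType) (d : measure_display) (T : measurableType d)
  (P : probability T R) (p : nat) (X : T -> 'cV[R]_p) : 'M[R]_p :=
  Emx P (fun w => (X w - Emx P X) *m (X w - Emx P X)^T).

Definition integrable_mx (R : realType) (d : measure_display) (T : measurableType d)
  (P : probability T R) (p q : nat) (X : T -> 'M[R]_(p, q)) : Prop :=
  forall i j, P.-integrable setT (EFin \o (fun w => X w i j)).

Definition sysv (R : Type) (T : Type) (n m dth : nat)
  (A : (nat -> 'cV[R]_dth) -> nat -> T -> 'M[R]_n)
  (B : (nat -> 'cV[R]_dth) -> nat -> T -> 'M[R]_(n, m))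
  (thetas : nat -> 'cV[R]_dth) (t : nat) (w : T) : 'cV[R]_((n + m) * n) :=
  vecc (row_mx (A thetas t w) (B thetas t w)).

(* Time-varying SMP with explicit witnesses N, M, phi:
   M^(k) symmetric, phi maps S_theta into P_N, and for every parameter
   sequence in S_theta and every t,
   E[v_t v_t^T | theta_bullet] = sum_k [phi(theta_t)]_k M^(k). *)
Definition TV_SMP_with (R : realType) (d : measure_display) (T : measurableType d)
  (P : probability T R) (dth D : nat)
  (v : (nat -> 'cV[R]_dth) -> nat -> T -> 'cV[R]_D)
  (N : nat) (M : 'I_N -> 'M[R]_D) (phi : 'cV[R]_dth -> 'cV[R]_N) : Prop :=
  [/\ forall k, (M k)^T = M k,
      forall th, simplex th -> simplex (phi th) &
      forall thetas : nat -> 'cV[R]_dth, (forall t, simplex (thetas t)) ->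
        forall t, Emx P (fun w => v thetas t w *m (v thetas t w)^T)
                  = \sum_(k < N) phi (thetas t) k 0 *: M k].

Definition TV_SMP (R : realType) (d : measure_display) (T : measurableType d)
  (P : probability T R) (dth D : nat)
  (v : (nat -> 'cV[R]_dth) -> nat -> T -> 'cV[R]_D) : Prop :=
  exists N (M : 'I_N -> 'M[R]_D) (phi : 'cV[R]_dth -> 'cV[R]_N),
    TV_SMP_with P v M phi.

Definition phi_outer (R : comPzRingType) (dth : nat) (th : 'cV[R]_dth)
  : 'cV[R]_(dth * dth) := vecc (th *m th^T).

From HB Require Import structures.
From mathcomp Require Import all_boot all_order all_algebra.
From mathcomp Require Import all_classical all_reals all_analysis.
Import Order.TTheory GRing.Theory Num.Theory.
Local Open Scope ring_scope.

(** In each case [E[v_t v_t^T]] is a quadratic form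
[sum_(k,k') theta_k theta_k' G k k'] in [theta = theta_t]: pathwise in (a)
and (b), where [v_t] is a [theta]-weighted combination of vertices, and in (c)
through [E[v v^T] = Cov[v] + E[v] E[v]^T], the covariance term being linear in
[theta] and made quadratic by the factor [sum_k' theta_k' = 1].  The entries
of [phi(theta) = vec(theta theta^T)] are exactly the products
[theta_k theta_k'], and a quadratic form only sees the symmetric part of [G],
so the form is [sum_i phi(theta)_i M_i] for the symmetrized [M]. *)

Section expectation_matrix.
Context (R : realType) (d : measure_display) (T : measurableType d)
  (P : probability T R).

Lemma expectation_sumZ (I : Type) (s : seq I) (c : I -> R)
    (f : I -> T -> R) :
  (forall i, P.-integrable setT (EFin \o f i)) ->
  expectation P (fun w => \sum_(i <- s) c i * f i w)
  = (\sum_(i <- s) (c i)%:E * expectation P (f i))%E.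
Proof.
move=> intf; rewrite unlock.
under eq_integral do rewrite -sumEFin.
under eq_integral do under eq_bigr do rewrite EFinM.
rewrite integral_sum => [||i]//; last by apply: integrableZl => //; exact: intf.
by apply: eq_bigr => i _; rewrite integralZl//; exact: intf.
Qed.

Lemma fine_expectationD (f g : T -> R) :
  P.-integrable setT (EFin \o f) -> P.-integrable setT (EFin \o g) ->
  fine (expectation P (fun w => f w + g w))
  = fine (expectation P f) + fine (expectation P g).
Proof.
move=> /Lfun1_integrable f1 /Lfun1_integrable g1.
by rewrite -fineD ?expectation_fin_num// -expectationD.
Qed.

Lemma fine_expectation_sumZ (I : Type) (s : seq I) (c : I -> R)
    (f : I -> T -> R) :
  (forall i, P.-integrable setT (EFin \o f i)) ->
  fine (expectation P (fun w => \sum_(i <- s) c i * f i w))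
  = \sum_(i <- s) c i * fine (expectation P (f i)).
Proof.
move=> intf; have Ef_fin i : (expectation P (f i) \is a fin_num)%E.
  exact/expectation_fin_num/Lfun1_integrable.
rewrite expectation_sumZ // -sum_fine => [|i _]; last by rewrite fin_numM.
by apply: eq_bigr => i _; rewrite fineM.
Qed.
Lemma Emx_cst p q (C : 'M[R]_(p, q)) : Emx P (fun=> C) = C.
Proof.
apply/matrixP => i j; rewrite mxE.
by rewrite (_ : (fun=> C i j) = cst (C i j))// expectation_cst.
Qed.

Lemma trmx_Emx p q (X : T -> 'M[R]_(p, q)) :
  (Emx P X)^T = Emx P (fun w => (X w)^T).
Proof.
apply/matrixP => i j; rewrite !mxE.
by congr (fine (expectation _ _)); apply/funext => w; rewrite mxE.
Qed.

Lemma EmxD p q (X Y : T -> 'M[R]_(p, q)) :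
  integrable_mx P X -> integrable_mx P Y ->
  Emx P (fun w => X w + Y w) = Emx P X + Emx P Y.
Proof.
move=> iX iY; apply/matrixP => i j; rewrite !mxE; under eq_fun do rewrite mxE.
exact: fine_expectationD.
Qed.

Lemma Emx_sumZ (I : finType) p q (c : I -> R) (X : I -> T -> 'M[R]_(p, q)) :
  (forall i, integrable_mx P (X i)) ->
  Emx P (fun w => \sum_i c i *: X i w) = \sum_i c i *: Emx P (X i).
Proof.
move=> iX; apply/matrixP => a b; rewrite mxE summxE.
under eq_fun do rewrite summxE; under eq_fun do under eq_bigr do rewrite mxE.
rewrite fine_expectation_sumZ => [|i]; last exact: iX.
by apply: eq_bigr => i _; rewrite !mxE.
Qed.

Lemma Emx_second_moment p (v : T -> 'cV[R]_p) :
  integrable_mx P v -> integrable_mx P (fun w => v w *m (v w)^T) ->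
  Emx P (fun w => v w *m (v w)^T) = Covmx P v + Emx P v *m (Emx P v)^T.
Proof.
move=> iv ivv; apply/matrixP => i j.
pose x k w := v w k 0.
have x1 k : x k \in Lfun P 1 by apply/Lfun1_integrable; exact: iv.
have outerE : (x i * x j)%R = (fun w => (v w *m (v w)^T) i j).
  by apply/funext => w; rewrite /= mxE big_ord1 mxE.
have xx1 : (x i * x j)%R \in Lfun P 1.
  by rewrite outerE; exact/Lfun1_integrable/ivv.
have covE : Covmx P v i j = fine (covariance P (x i) (x j)).
  rewrite !mxE covariance.unlock; congr (fine (expectation _ _)).
  by apply/funext => w; rewrite !mxE big_ord1 !mxE.
rewrite [RHS]mxE covE covarianceE// !mxE big_ord1 !mxE.
by rewrite fineB ?fineM ?fin_numM ?expectation_fin_num// outerE subrK.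
Qed.

End expectation_matrix.

Lemma sum_mxvec_index (V : nmodType) m n (F : 'I_(m * n) -> V) :
  \sum_i F i = \sum_j \sum_k F (mxvec_index j k).
Proof.
by rewrite pair_bigA (reindex _ (curry_mxvec_bij _ _)); apply: eq_bigr => -[].
Qed.

Section quadratic_forms.
Variable R : comPzRingType.

Lemma outer_lincomb (I : finType) D (a : I -> R) (x : I -> 'cV[R]_D) :
  (\sum_k a k *: x k) *m (\sum_k a k *: x k)^T
  = \sum_k \sum_k' (a k * a k') *: (x k *m (x k')^T).
Proof.
rewrite mulmx_suml; apply: eq_bigr => k _.
rewrite linear_sum mulmx_sumr; apply: eq_bigr => k' _.
by rewrite linearZ -scalemxAl -scalemxAr scalerA.
Qed.

Lemma trmx_sym_outer D (x y : 'cV[R]_D) :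
  (x *m y^T + y *m x^T)^T = x *m y^T + y *m x^T.
Proof. by rewrite linearD /= !trmx_mul !trmxK addrC. Qed.

Lemma phi_outerE dth (th : 'cV[R]_dth) k k' :
  phi_outer th (mxvec_index k' k) 0 = th k 0 * th k' 0.
Proof. by rewrite /phi_outer /vecc mxE mxvecE !mxE big_ord1 mxE. Qed.

Lemma sum_phi_outerZ dth D (th : 'cV[R]_dth) (M : 'I_(dth * dth) -> 'M[R]_D) :
  \sum_i phi_outer th i 0 *: M i
  = \sum_k \sum_k' (th k 0 * th k' 0) *: M (mxvec_index k' k).
Proof.
rewrite sum_mxvec_index exchange_big /=.
by apply: eq_bigr => k _; apply: eq_bigr => k' _; rewrite phi_outerE.
Qed.

Lemma sum_quad_constr (I : finType) D (a : I -> R) (S : I -> 'M[R]_D) :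
  \sum_k \sum_k' (a k * a k') *: S k = (\sum_k a k) *: \sum_k a k *: S k.
Proof.
rewrite scaler_sumr; apply: eq_bigr => k _.
by rewrite scalerA mulrC -scaler_suml mulr_sumr; under eq_bigr do rewrite mulrC.
Qed.

End quadratic_forms.

Lemma sum_quad_symmetrize (R : numFieldType) (I : finType) D (a : I -> R)
    (G : I -> I -> 'M[R]_D) :
  \sum_k \sum_k' (a k * a k') *: (2^-1 *: (G k k' + G k' k))
  = \sum_k \sum_k' (a k * a k') *: G k k'.
Proof.
have swapE : \sum_k \sum_k' (a k * a k') *: G k' k
             = \sum_k \sum_k' (a k * a k') *: G k k'.
  rewrite exchange_big; apply: eq_bigr => k _; apply: eq_bigr => k' _.
  by rewrite mulrC.
under eq_bigr do under eq_bigr do rewrite scalerA mulrC -scalerA scalerDr.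
under eq_bigr do rewrite -scaler_sumr big_split.
rewrite -scaler_sumr big_split /= swapE -mulr2n -scaler_nat scalerA.
by rewrite mulVf ?scale1r ?pnatr_eq0.
Qed.

Lemma simplex_phi_outer (R : numDomainType) dth (th : 'cV[R]_dth) :
  simplex th -> simplex (phi_outer th).
Proof.
move=> [th_ge0 th_sum1]; split.
  by move=> i; case/mxvec_indexP: i => k' k; rewrite phi_outerE mulr_ge0.
rewrite sum_mxvec_index.
under eq_bigr do under eq_bigr do rewrite phi_outerE.
by under eq_bigr do rewrite -mulr_suml th_sum1 mul1r.
Qed.

Section TV_SMP_phi_outer.
Context (R : realType) (d : measure_display) (T : measurableType d)
  (P : probability T R) (dth D : nat)
  (v : (nat -> 'cV[R]_dth) -> nat -> T -> 'cV[R]_D).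

Lemma TV_SMP_with_phi_outer (M : 'I_(dth * dth) -> 'M[R]_D) :
  (forall k k', (M (mxvec_index k' k))^T = M (mxvec_index k' k)) ->
  (forall thetas, (forall t, simplex (thetas t)) -> forall t,
     Emx P (fun w => v thetas t w *m (v thetas t w)^T)
     = \sum_k \sum_k' (thetas t k 0 * thetas t k' 0) *: M (mxvec_index k' k)) ->
  TV_SMP_with P v M (@phi_outer R dth).
Proof.
move=> M_sym momentE; split=> [i|th|thetas thetas_simplex t].
- by case/mxvec_indexP: i.
- exact: simplex_phi_outer.
- by rewrite sum_phi_outerZ momentE.
Qed.

Lemma TV_SMP_deterministic_vertices (vk : 'I_dth -> 'cV[R]_D)
    (M : 'I_(dth * dth) -> 'M[R]_D) :
  (forall thetas, (forall t, simplex (thetas t)) -> forall t w,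
     v thetas t w = \sum_k thetas t k 0 *: vk k) ->
  (forall k k', M (mxvec_index k' k)
     = 2^-1 *: (vk k *m (vk k')^T + vk k' *m (vk k)^T)) ->
  TV_SMP_with P v M (@phi_outer R dth).
Proof.
move=> vE ME; apply: TV_SMP_with_phi_outer => [k k'|th th_simplex t].
  by rewrite ME linearZ /= trmx_sym_outer.
under eq_fun do rewrite vE//.
rewrite Emx_cst outer_lincomb.
under [RHS]eq_bigr do under eq_bigr do rewrite ME.
by rewrite sum_quad_symmetrize.
Qed.

Lemma TV_SMP_random_vertices (vk : nat -> 'I_dth -> T -> 'cV[R]_D)
    (M : 'I_(dth * dth) -> 'M[R]_D) :
  (forall thetas, (forall t, simplex (thetas t)) -> forall t w,
     v thetas t w = \sum_k thetas t k 0 *: vk t k w) ->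
  (forall t k k', integrable_mx P (fun w => vk t k w *m (vk t k' w)^T)) ->
  (forall t k k', Emx P (fun w => vk t k w *m (vk t k' w)^T)
                = Emx P (fun w => vk 0%N k w *m (vk 0%N k' w)^T)) ->
  (forall k k', M (mxvec_index k' k)
     = 2^-1 *: Emx P (fun w => vk 0%N k w *m (vk 0%N k' w)^T
                              + vk 0%N k' w *m (vk 0%N k w)^T)) ->
  TV_SMP_with P v M (@phi_outer R dth).
Proof.
move=> vE vk_int vk_stationary ME.
apply: TV_SMP_with_phi_outer => [k k'|th th_simplex t].
  by rewrite ME linearZ /= trmx_Emx; under eq_fun do rewrite trmx_sym_outer.
under eq_fun do rewrite vE// outer_lincomb pair_big /=.
rewrite Emx_sumZ => [|[k k']]; last exact: vk_int.
under [RHS]eq_bigr do under eq_bigr do rewrite ME EmxD//.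
rewrite sum_quad_symmetrize pair_big.
by apply: eq_bigr => -[k k'] _; rewrite vk_stationary.
Qed.

Lemma TV_SMP_affine_moments (mu : 'I_dth -> 'cV[R]_D)
    (Sig : 'I_dth -> 'M[R]_D) (M : 'I_(dth * dth) -> 'M[R]_D) :
  (forall k, (Sig k)^T = Sig k) ->
  (forall thetas, (forall t, simplex (thetas t)) -> forall t,
     integrable_mx P (v thetas t) /\
     integrable_mx P (fun w => v thetas t w *m (v thetas t w)^T)) ->
  (forall thetas, (forall t, simplex (thetas t)) -> forall t,
     Emx P (v thetas t) = \sum_k thetas t k 0 *: mu k) ->
  (forall thetas, (forall t, simplex (thetas t)) -> forall t,
     Covmx P (v thetas t) = \sum_k thetas t k 0 *: Sig k) ->
  (forall k k', M (mxvec_index k' k)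
     = 2^-1 *: (mu k *m (mu k')^T + mu k' *m (mu k)^T) + Sig k) ->
  TV_SMP_with P v M (@phi_outer R dth).
Proof.
move=> Sig_sym v_int meanE covE ME.
apply: TV_SMP_with_phi_outer => [k k'|th th_simplex t].
  by rewrite ME linearD linearZ /= trmx_sym_outer Sig_sym.
have [v1 vv1] := v_int th th_simplex t.
rewrite Emx_second_moment// covE// meanE// outer_lincomb addrC.
under [RHS]eq_bigr do under eq_bigr do rewrite ME scalerDr.
under [RHS]eq_bigr do rewrite big_split /=.
rewrite big_split /= sum_quad_symmetrize sum_quad_constr.
by case: (th_simplex t) => _ ->; rewrite scale1r.
Qed.

End TV_SMP_phi_outer.

Theorem corollary3 (R : realType) (d : measure_display) (T : measurableType d)
  (P : probability T R) (n m dth : nat)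
  (A : (nat -> 'cV[R]_dth) -> nat -> T -> 'M[R]_n)
  (B : (nat -> 'cV[R]_dth) -> nat -> T -> 'M[R]_(n, m)) :
  (* (a) deterministic vertices *)
  (forall (vk : 'I_dth -> 'cV[R]_((n + m) * n))
          (M : 'I_(dth * dth) -> 'M[R]_((n + m) * n)),
     (forall thetas, (forall t, simplex (thetas t)) -> forall t w,
        sysv A B thetas t w = \sum_(k < dth) thetas t k 0 *: vk k) ->
     (forall k k' : 'I_dth, M (mxvec_index k' k)
        = 2^-1 *: (vk k *m (vk k')^T + vk k' *m (vk k)^T)) ->
     TV_SMP_with P (sysv A B) M (@phi_outer R dth)) /\
  (* (b) random vertices, identically distributed in t, independent of the parameters *)
  (forall (vk : nat -> 'I_dth -> T -> 'cV[R]_((n + m) * n))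
          (M : 'I_(dth * dth) -> 'M[R]_((n + m) * n)),
     (forall thetas, (forall t, simplex (thetas t)) -> forall t w,
        sysv A B thetas t w = \sum_(k < dth) thetas t k 0 *: vk t k w) ->
     (forall t k k', integrable_mx P (fun w => vk t k w *m (vk t k' w)^T)) ->
     (forall t k k', Emx P (fun w => vk t k w *m (vk t k' w)^T)
                   = Emx P (fun w => vk 0%N k w *m (vk 0%N k' w)^T)) ->
     (forall k k' : 'I_dth, M (mxvec_index k' k)
        = 2^-1 *: Emx P (fun w => vk 0%N k w *m (vk 0%N k' w)^T
                                 + vk 0%N k' w *m (vk 0%N k w)^T)) ->
     TV_SMP_with P (sysv A B) M (@phi_outer R dth)) /\
  (* (c) affine conditional mean and covariance *)
  (forall (mu : 'I_dth -> 'cV[R]_((n + m) * n))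
          (Sig : 'I_dth -> 'M[R]_((n + m) * n))
          (M : 'I_(dth * dth) -> 'M[R]_((n + m) * n)),
     (forall k, (Sig k)^T = Sig k) ->
     (forall thetas, (forall t, simplex (thetas t)) -> forall t,
        integrable_mx P (sysv A B thetas t) /\
        integrable_mx P (fun w => sysv A B thetas t w *m (sysv A B thetas t w)^T)) ->
     (forall thetas, (forall t, simplex (thetas t)) -> forall t,
        Emx P (sysv A B thetas t) = \sum_(k < dth) thetas t k 0 *: mu k) ->
     (forall thetas, (forall t, simplex (thetas t)) -> forall t,
        Covmx P (sysv A B thetas t) = \sum_(k < dth) thetas t k 0 *: Sig k) ->
     (forall k k' : 'I_dth, M (mxvec_index k' k)
        = 2^-1 *: (mu k *m (mu k')^T + mu k' *m (mu k)^T) + Sig k) ->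
     TV_SMP_with P (sysv A B) M (@phi_outer R dth)).
Proof.
split; [|split].
- exact: TV_SMP_deterministic_vertices.
- exact: TV_SMP_random_vertices.
- exact: TV_SMP_affine_moments.
Qed.
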